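(* When the procedure $\Gamma\mathcal{DAG}_2$ described below produces a directed acyclic graph with $n$ vertices, it performs $O(n^2)$ calls to the random number generator and solves the equation defining $t$ (in $\Gamma\mathcal H$) exactly $n$ times.
   Context: $\mathrm{Set}(z,w)=\sum_{n\ge0}\frac{z^n}{(1+w)^{\binom n2}n!}$; $\mathrm{DAG}(z,w,u)=\frac{\mathrm{Set}((u-1)z,w)}{\mathrm{Set}(-z,w)}$ is the graphic generating function of labelled DAGs (by vertices, edges, sources). An $\mathcal H$-structure is a labelled DAG with at least one vertex whose smallest-labelled source is an isolated vertex (its distinguished source). Mutually recursive procedures: $\Gamma\mathcal H(z,w,u)$: draw $x$ uniform in $[0,1)$ (one RNG call); compute (solve for) the unique $t\in[0,u]$ with $\frac{\mathrm{Set}((t-1)z,w)-\mathrm{Set}(-z,w)}{\mathrm{Set}((u-1)z,w)-\mathrm{Set}(-z,w)}=x$; let $G_1=\Gamma\mathcal{DAG}_2(\frac z{1+w},w,t)$; add a new isolated vertex $v$, give it a uniform label among $\{1,\dots,v(G_1)+1\}$, relabel $G_1$ order-preservingly with the remaining labels, then cyclically permute source labels so that $v$ has the smallest source label. $\Gamma\mathcal{DAG}_2(z,w,u)$: draw a Bernoulli variable with parameter $1/\mathrm{DAG}(z,w,u)$ (one RNG call); if it succeeds return the empty graph. Otherwise let $H=\Gamma\mathcal H(z,w,u)$, $G_2=\Gamma\mathcal{DAG}_2(z,w,\frac w{1+w})$, form their disjoint union with a uniformly random order-preserving relabelling, and for each pair $(v_1,v_2)\in H\times G_2$: if $v_1$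 is the distinguished source of $H$ and $v_2$ a source of $G_2$ add edge $(v_1,v_2)$, otherwise add it with probability $\frac w{1+w}$ (one RNG call). Each Bernoulli or uniform real draw counts as one call to the random number generator. *)

From Stdlib Require Import Reals Lra Lia Arith List Bool.
From Coquelicot Require Import Coquelicot.
Import ListNotations.
Open Scope R_scope.
Open Scope bool_scope.

Definition SetF (z w : R) : R :=
  Series (fun n : nat => z ^ n / ((1 + w) ^ (Nat.div (n * (n - 1)) 2) * INR (fact n))).

Definition DAGF (z w u : R) : R := SetF ((u - 1) * z) w / SetF (- z) w.

(** * Labelled directed graphs on vertex labels 0 .. nv-1
    (label i here stands for label i+1 of the paper). *)
Record graph := mkGraph { nv : nat; edge : nat -> nat -> bool }.

Definition emptyG : graph := mkGraph 0 (fun _ _ => false).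

Definition is_source (g : graph) (i : nat) : bool :=
  forallb (fun j => negb (edge g j i)) (seq 0 (nv g)).

Definition sources (g : graph) : list nat := filter (is_source g) (seq 0 (nv g)).

Fixpoint index_of (y : nat) (l : list nat) : option nat :=
  match l with
  | [] => None
  | x :: l' => if Nat.eqb x y then Some 0%nat
               else match index_of y l' with Some i => Some (S i) | None => None end
  end.

(** Step of Gamma H after G1 has been drawn: add an isolated vertex with label
    [l] (0 <= l <= nv G1), relabel G1 order-preservingly with the remaining
    labels, then cyclically permute the source labels so that the new vertex
    gets the smallest source label. *)
Definition add_vertex (g1 : graph) (l : nat) : graph :=
  mkGraph (S (nv g1))
    (fun x y =>
       let dec v := if Nat.ltb v l then v else (v - 1)%nat in
       negb (Nat.eqb x l) && negb (Nat.eqb y l) && edge g1 (dec x) (dec y)).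

Definition hstep (g1 : graph) (l : nat) : graph :=
  let g := add_vertex g1 l in
  let srcs := sources g in
  let r := length srcs in
  let j := match index_of l srcs with Some j => j | None => 0%nat end in
  (* new label y (a source s_i) carries the vertex formerly labelled
     s_{(i+j) mod r}; so old s_j = l becomes s_0 *)
  let q y := match index_of y srcs with
             | Some i => nth (Nat.modulo (i + j) r) srcs 0%nat
             | None => y end in
  mkGraph (nv g) (fun x y => edge g (q x) (q y)).

(** Cross edges of Gamma DAG_2 between H (vertices 0..a-1) and G2
    (vertices 0..b-1).  Pairs are processed in lexicographic order; a forced
    pair gets its edge without using the RNG, any other pair gets its edge iff
    the next uniform value [xs k] is < p (one RNG call). *)
Fixpoint cross_fold (xs : nat -> R) (p : R) (forced : nat -> nat -> bool)
    (k : nat) (ps : list (nat * nat)) : list (nat * nat) * nat :=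
  match ps with
  | [] => ([], k)
  | (i, j) :: ps' =>
      if forced i j then
        let (es, k') := cross_fold xs p forced k ps' in ((i, j) :: es, k')
      else if Rlt_dec (xs k) p then
        let (es, k') := cross_fold xs p forced (S k) ps' in ((i, j) :: es, k')
      else cross_fold xs p forced (S k) ps'
  end.

Definition pair_mem (es : list (nat * nat)) (i j : nat) : bool :=
  existsb (fun e => Nat.eqb (fst e) i && Nat.eqb (snd e) j) es.

Definition count_sel (sel : nat -> bool) (n : nat) : nat :=
  length (filter sel (seq 0 n)).

(** Disjoint union of H and G2 with the order-preserving relabelling given by
    [sel] (labels x with [sel x] go to H, the others to G2), plus cross
    edges; the distinguished source of H is its smallest source. *)
Definition union_step (xs : nat -> R) (w : R) (H G2 : graph) (k : nat)
    (sel : nat -> bool) : graph * nat :=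
  let a := nv H in
  let b := nv G2 in
  let dsrc := nth 0%nat (sources H) 0%nat in
  let forced i j := Nat.eqb i dsrc && is_source G2 j in
  let res := cross_fold xs (w / (1 + w)) forced k (list_prod (seq 0 a) (seq 0 b)) in
  let es := fst res in
  let edge0 x y :=
    if Nat.ltb x a && Nat.ltb y a then edge H x y
    else if negb (Nat.ltb x a) && negb (Nat.ltb y a) then edge G2 (x - a) (y - a)
    else Nat.ltb x a && negb (Nat.ltb y a) && pair_mem es x (y - a) in
  let q x := if sel x then count_sel sel x else (a + (x - count_sel sel x))%nat in
  (mkGraph (a + b) (fun x y => edge0 (q x) (q y)), snd res).

(** * The two mutually recursive procedures, as a big-step relation.
    [xs] is the stream of uniform values in [0,1) delivered by the RNG;
    [runH xs z w u k G k' s] : started at stream position k, Gamma H(z,w,u)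
    returns G, the stream is then at position k' (so k'-k RNG calls were
    made), and the equation defining t was solved s times.  Likewise [runD]
    for Gamma DAG_2.  The combinatorial relabelling choices (label [l],
    selection [sel]) are arbitrary. *)
Inductive runH (xs : nat -> R) : R -> R -> R -> nat -> graph -> nat -> nat -> Prop :=
| runH_step z w u k t G1 k1 s1 l :
    0 <= t <= u ->
    (SetF ((t - 1) * z) w - SetF (- z) w) / (SetF ((u - 1) * z) w - SetF (- z) w) = xs k ->
    runD xs (z / (1 + w)) w t (S k) G1 k1 s1 ->
    (l <= nv G1)%nat ->
    runH xs z w u k (hstep G1 l) k1 (S s1)
with runD (xs : nat -> R) : R -> R -> R -> nat -> graph -> nat -> nat -> Prop :=
| runD_empty z w u k :
    xs k < 1 / DAGF z w u ->
    runD xs z w u k emptyG (S k) 0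
| runD_union z w u k H k1 s1 G2 k2 s2 sel :
    ~ (xs k < 1 / DAGF z w u) ->
    runH xs z w u (S k) H k1 s1 ->
    runD xs z w (w / (1 + w)) k1 G2 k2 s2 ->
    count_sel sel (nv H + nv G2) = nv H ->
    runD xs z w u k (fst (union_step xs w H G2 k2 sel))
                    (snd (union_step xs w H G2 k2 sel)) (s1 + s2).

(* Every Gamma H step adds exactly one vertex and solves for t once, so the
   number of solves equals the number of vertices.  For the RNG calls, a
   Gamma H run producing n >= 1 vertices uses at most n^2 + 1 calls and a
   Gamma DAG_2 run producing n vertices at most (n + 1)^2: a union of H (h
   vertices) and G2 (g vertices) spends one Bernoulli draw, at most h * g
   draws on cross edges, and 1 + (h^2 + 1) + (g + 1)^2 + h g <= (h + g + 1)^2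
   since h >= 1.  The bound holds for any stream of values whatsoever. *)
From Stdlib Require Import Reals Arith Lia List.
Open Scope R_scope.

Lemma cross_fold_calls xs p forced ps k :
  (k <= snd (cross_fold xs p forced k ps) <= k + length ps)%nat.
Proof.
  revert k; induction ps as [|[i j] ps IH]; intros k; simpl; [lia|].
  destruct (forced i j); [|destruct (Rlt_dec (xs k) p)].
  - specialize (IH k); destruct (cross_fold xs p forced k ps); simpl in *; lia.
  - specialize (IH (S k)); destruct (cross_fold xs p forced (S k) ps); simpl in *; lia.
  - specialize (IH (S k)); lia.
Qed.

Lemma union_step_calls xs w H G2 k sel :
  (k <= snd (union_step xs w H G2 k sel) <= k + nv H * nv G2)%nat.
Proof.
  unfold union_step; simpl.
  match goal with |- context [cross_fold xs ?p ?f k ?ps] =>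
    pose proof (cross_fold_calls xs p f ps k) as Hcalls end.
  rewrite length_prod, !length_seq in Hcalls; exact Hcalls.
Qed.

Scheme runH_mut_ind := Induction for runH Sort Prop
with runD_mut_ind := Induction for runD Sort Prop.

Lemma runD_calls_solves xs z w u k G k' s :
  runD xs z w u k G k' s ->
  (k <= k' <= k + (nv G + 1) ^ 2 /\ s = nv G)%nat.
Proof.
  revert z w u k G k' s.
  apply (runD_mut_ind xs
    (fun _ _ _ k G k' s _ =>
       (1 <= nv G /\ k <= k' <= k + nv G ^ 2 + 1 /\ s = nv G)%nat)
    (fun _ _ _ k G k' s _ => (k <= k' <= k + (nv G + 1) ^ 2 /\ s = nv G)%nat)).
  - intros z w u k t G1 k1 s1 l _ _ _ IH _.
    simpl in *; nia.
  - intros; simpl; lia.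
  - intros z w u k H k1 s1 G2 k2 s2 sel _ _ IH_H _ IH_G2 _.
    pose proof (union_step_calls xs w H G2 k2 sel).
    change (nv (fst (union_step xs w H G2 k2 sel))) with (nv H + nv G2)%nat.
    simpl in *; nia.
Qed.

Theorem lemma9 :
  exists C : nat,
    forall (xs : nat -> R), (forall i, 0 <= xs i < 1) ->
    forall (z w u : R) (k : nat) (G : graph) (k' s : nat),
      runD xs z w u k G k' s ->
      (k <= k' /\ k' - k <= C * (nv G + 1) ^ 2)%nat /\ s = nv G.
Proof.
  exists 1%nat; intros xs _ z w u k G k' s Hrun.
  destruct (runD_calls_solves xs z w u k G k' s Hrun) as [Hcalls Hsolves].
  rewrite Nat.mul_1_l; repeat split; lia.
Qed.
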